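(* Let $\alpha\in\mathbb R$ be badly approximable, $k\in\mathbb Z\setminus\{0\}$ and $l\in\mathbb N$. Then for any $\epsilon>0$ there exists a constant $C>0$ depending only on $\alpha$ and $\epsilon$ such that for all integers $0\le M<N$, $$\left|\sum_{n=M+1}^N e^{2\pi i k\alpha n^2/l}\right|\le C(N-M)^{1/2+\epsilon}|k|^{1/2+\epsilon}l^{1/2}.$$
   Context: A real number $\alpha$ is badly approximable if the partial quotients in its continued fraction expansion are bounded. *)

From Stdlib Require Import Reals ZArith.
From Coquelicot Require Import Coquelicot.
Open Scope R_scope.

Fixpoint cf_rem (alpha : R) (n : nat) : R :=
  match n with
  | O => alpha
  | S m => / (cf_rem alpha m - IZR (Int_part (cf_rem alpha m)))
  end.

Definition partial_quotient (alpha : R) (n : nat) : Z :=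
  Int_part (cf_rem alpha n).

Definition irrational (alpha : R) : Prop :=
  forall (p q : Z), q <> 0%Z -> alpha <> IZR p / IZR q.

Definition badly_approximable (alpha : R) : Prop :=
  irrational alpha /\
  exists B : R, forall n : nat, IZR (partial_quotient alpha (S n)) <= B.

Definition cexpi (theta : R) : C := (cos theta, sin theta).

From Stdlib Require Import Reals ZArith Lra Lia.
From Coquelicot Require Import Coquelicot.
Open Scope R_scope.

(* Bounded partial quotients give a Diophantine constant: running the
   continued fraction of alpha backwards from a too good approximation
   u alpha ~ v produces an integer strictly between 0 and 1, hence
   |q alpha - p| >= c / |q|.  Weyl differencing bounds |S|^2 by L plus twice a
   sum over d < L of geometric sums of ratio e(2 beta (d + 1)), beta = k alpha / l,
   each at most min(L, 1 / ||2 beta (d + 1)||).  The Diophantine bound makes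
   these points c / (2 |k| L l)-separated modulo 1, so the sum of the
   1 / ||.|| is O(|k| L l log(|k| L l) / c); the logarithm is absorbed by
   L^(2 eps) when |k| l < L, and otherwise the trivial bound 3 L^2 suffices. *)

Lemma irrational_neq_IZR (y : R) (a : Z) : irrational y -> y <> IZR a.
Proof. intros Hy E. apply (Hy a 1%Z); [lia|]. rewrite E. simpl. field. Qed.

Lemma irrational_minus_IZR (y : R) (a : Z) : irrational y -> irrational (y - IZR a).
Proof.
  intros Hy p q Hq E. apply (Hy (p + a * q)%Z q Hq).
  apply not_0_IZR in Hq. rewrite plus_IZR, mult_IZR.
  replace y with (y - IZR a + IZR a) by ring. rewrite E. field. exact Hq.
Qed.

Lemma irrational_inv (y : R) : irrational y -> irrational (/ y).
Proof.
  intros Hy p q Hq E.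
  assert (Hy0 : y <> 0) by exact (irrational_neq_IZR y 0 Hy).
  assert (Hp : p <> 0%Z).
  { intros ->. apply (Rinv_neq_0_compat y Hy0). rewrite E. unfold Rdiv. ring. }
  apply (Hy q p Hp). rewrite <- (Rinv_inv y), E.
  apply not_0_IZR in Hq, Hp. field. split; assumption.
Qed.

Lemma irrational_frac_part_bounds (y : R) :
  irrational y -> 0 < y - IZR (Int_part y) < 1.
Proof.
  intros Hy. destruct (base_Int_part y) as [Hlo Hhi]. split; [|lra].
  destruct (Rle_lt_or_eq_dec _ _ Hlo) as [Hlt|Heq]; [lra|].
  exfalso. exact (irrational_neq_IZR y _ Hy (eq_sym Heq)).
Qed.

Section ContinuedFraction.
Variable alpha : R.
Hypothesis alpha_irr : irrational alpha.

Local Notation x := (cf_rem alpha).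
Local Notation a := (partial_quotient alpha).

Lemma cf_rem_irrational (n : nat) : irrational (x n).
Proof.
  induction n as [|n IH]; simpl; [exact alpha_irr|].
  apply irrational_inv, irrational_minus_IZR, IH.
Qed.

Lemma cf_rem_frac_bounds (n : nat) : 0 < x n - IZR (a n) < 1.
Proof. apply irrational_frac_part_bounds, cf_rem_irrational. Qed.

Lemma cf_rem_S_mul (n : nat) : x (S n) * (x n - IZR (a n)) = 1.
Proof.
  pose proof (cf_rem_frac_bounds n).
  unfold partial_quotient in *. simpl. field. lra.
Qed.

Lemma cf_rem_S_gt1 (n : nat) : 1 < x (S n).
Proof.
  pose proof (cf_rem_S_mul n). pose proof (cf_rem_frac_bounds n). nra.
Qed.

Lemma partial_quotient_S_ge1 (n : nat) : 1 <= IZR (a (S n)).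
Proof.
  pose proof (cf_rem_S_gt1 n). pose proof (cf_rem_frac_bounds (S n)).
  apply IZR_le. enough (0 < a (S n))%Z by lia. apply lt_IZR. lra.
Qed.

Lemma cf_rem_SS_mul_ge2 (n : nat) : 2 <= x (S n) * x (S (S n)).
Proof.
  pose proof (cf_rem_S_mul (S n)). pose proof (partial_quotient_S_ge1 n).
  pose proof (cf_rem_S_gt1 (S n)). nra.
Qed.

Fixpoint cf_prod (n : nat) : R :=
  match n with O => 1 | S m => cf_prod m * x (S m) end.

Lemma cf_prod_ge1 (n : nat) : 1 <= cf_prod n.
Proof. induction n; cbn [cf_prod]; [lra|]. pose proof (cf_rem_S_gt1 n). nra. Qed.

Lemma cf_prod_le_S (n : nat) : cf_prod n <= cf_prod (S n).
Proof. cbn [cf_prod]. pose proof (cf_rem_S_gt1 n). pose proof (cf_prod_ge1 n). nra. Qed.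

Lemma cf_prod_SS_ge (n : nat) : 2 * cf_prod n <= cf_prod (S (S n)).
Proof.
  cbn [cf_prod]. pose proof (cf_rem_SS_mul_ge2 n). pose proof (cf_prod_ge1 n). nra.
Qed.

Lemma cf_prod_double_ge (n : nat) : INR n + 1 <= cf_prod (2 * n).
Proof.
  induction n as [|n IH]; [simpl; lra|].
  replace (2 * S n)%nat with (S (S (2 * n))) by lia.
  pose proof (cf_prod_SS_ge (2 * n)). rewrite S_INR. pose proof (pos_INR n). lra.
Qed.

Variable B : R.
Hypothesis partial_quotient_le : forall n : nat, IZR (a (S n)) <= B.

Lemma cf_rem_S_lt (n : nat) : x (S n) < B + 1.
Proof.
  pose proof (cf_rem_frac_bounds (S n)). pose proof (partial_quotient_le n). lra.
Qed.

Lemma cf_prod_S_le (n : nat) : cf_prod (S n) <= (B + 1) * cf_prod n.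
Proof. cbn [cf_prod]. pose proof (cf_rem_S_lt n). pose proof (cf_prod_ge1 n). nra. Qed.

Lemma cf_prod_first_above (T : R) (m : nat) : 1 < T -> T <= cf_prod m ->
  exists n, T <= cf_prod (S n) <= (B + 1) * T.
Proof.
  intros HT. induction m as [|m IH]; cbn [cf_prod]; intros Hm; [lra|].
  destruct (Rle_lt_dec T (cf_prod m)) as [Hle|Hlt]; [exact (IH Hle)|].
  exists m. split; [exact Hm|].
  pose proof (cf_prod_S_le m) as Hle. pose proof (cf_rem_S_lt m). pose proof (cf_rem_S_gt1 m).
  cbn [cf_prod] in Hle. nra.
Qed.

(* Running the continued fraction backwards from an approximation u0 alpha ~ v0
   yields integers u n with u n * cf_prod n close to u0 for as long as the
   error, which grows like cf_prod n, stays small. *)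
Variables u0 v0 : Z.

Fixpoint cf_back (n : nat) : Z * Z :=
  match n with
  | O => (u0, v0)
  | S m => let (u, v) := cf_back m in ((v - u * a m)%Z, u)
  end.

Local Notation u n := (IZR (fst (cf_back n))).
Local Notation v n := (IZR (snd (cf_back n))).

Definition cf_err (n : nat) : R := u n * x n - v n.

Lemma cf_err_S (n : nat) : cf_err (S n) = - x (S n) * cf_err n.
Proof.
  unfold cf_err. cbn [cf_back]. destruct (cf_back n) as [p q]. cbn [fst snd].
  rewrite minus_IZR, mult_IZR.
  transitivity ((IZR q - IZR p * IZR (a n)) * x (S n)
                - IZR p * (x (S n) * (x n - IZR (a n)))).
  - rewrite cf_rem_S_mul. ring.
  - ring.
Qed.

Lemma Rabs_cf_err (n : nat) : Rabs (cf_err n) = Rabs (cf_err 0) * cf_prod n.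
Proof.
  induction n as [|n IH]; cbn [cf_prod]; [ring|].
  rewrite cf_err_S, Rabs_mult, Rabs_Ropp, IH.
  rewrite (Rabs_right (x (S n))); [ring|]. pose proof (cf_rem_S_gt1 n). lra.
Qed.

Lemma cf_back_mul_S (n : nat) :
  u (S n) * cf_prod (S n) = u n * cf_prod n + cf_prod n * cf_err (S n).
Proof.
  unfold cf_err. cbn [cf_back cf_prod]. destruct (cf_back n) as [p q]. cbn [fst snd]. ring.
Qed.

Lemma cf_back_drift (n : nat) :
  Rabs (u (S n) * cf_prod (S n) - IZR u0) <= 2 * Rabs (cf_err 0) * cf_prod n * cf_prod (S n).
Proof.
  pose proof (Rabs_pos (cf_err 0)).
  induction n as [|n IH].
  - rewrite cf_back_mul_S. simpl (cf_back 0). simpl (cf_prod 0). simpl fst.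
    replace (IZR u0 * 1 + 1 * cf_err 1 - IZR u0) with (cf_err 1) by ring.
    rewrite Rabs_cf_err. pose proof (cf_prod_ge1 1). simpl in *. nra.
  - rewrite cf_back_mul_S.
    replace (u (S n) * cf_prod (S n) + cf_prod (S n) * cf_err (S (S n)) - IZR u0)
      with ((u (S n) * cf_prod (S n) - IZR u0) + cf_prod (S n) * cf_err (S (S n))) by ring.
    eapply Rle_trans; [apply Rabs_triang|].
    rewrite Rabs_mult, Rabs_cf_err, (Rabs_right (cf_prod (S n)));
      [|pose proof (cf_prod_ge1 (S n)); lra].
    pose proof (cf_prod_SS_ge n). pose proof (cf_prod_ge1 (S n)).
    assert (Rabs (cf_err 0) * cf_prod (S n) * (2 * cf_prod n)
            <= Rabs (cf_err 0) * cf_prod (S n) * cf_prod (S (S n))).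
    { apply Rmult_le_compat_l; nra. }
    nra.
Qed.

Lemma cf_approx_lower_bound_pos : (1 <= u0)%Z ->
  / (16 * (B + 1) ^ 2) / IZR u0 <= Rabs (IZR u0 * alpha - IZR v0).
Proof.
  intros Hu. pose proof (IZR_le _ _ Hu) as HuR.
  pose proof (cf_rem_S_gt1 0). pose proof (cf_rem_S_lt 0).
  set (c := / (16 * (B + 1) ^ 2)).
  change (IZR u0 * alpha - IZR v0) with (cf_err 0).
  destruct (Rle_lt_dec (c / IZR u0) (Rabs (cf_err 0))) as [Hle|Hlt]; [exact Hle|exfalso].
  assert (Hsmall : Rabs (cf_err 0) * IZR u0 < c).
  { apply (Rmult_lt_compat_r (IZR u0)) in Hlt; [|lra].
    unfold Rdiv in Hlt. rewrite Rmult_assoc, Rinv_l in Hlt; lra. }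
  assert (Hlarge : 2 * IZR u0 <= cf_prod (2 * (2 * Z.to_nat u0))).
  { eapply Rle_trans; [|apply cf_prod_double_ge].
    rewrite !mult_INR, (INR_IZR_INZ (Z.to_nat u0)), Z2Nat.id by lia. simpl. lra. }
  (* once cf_prod (S n) reaches 2 u0 the drift is below u0 / 2, forcing 0 < u (S n) < 1 *)
  destruct (cf_prod_first_above (2 * IZR u0) _ ltac:(lra) Hlarge) as [n [Hn1 Hn2]].
  pose proof (cf_back_drift n) as Hdrift.
  pose proof (cf_prod_le_S n). pose proof (cf_prod_ge1 n). pose proof (Rabs_pos (cf_err 0)).
  assert (Hsq : cf_prod n * cf_prod (S n) <= ((B + 1) * (2 * IZR u0)) ^ 2).
  { apply Rle_trans with (cf_prod (S n) * cf_prod (S n)); [apply Rmult_le_compat_r; lra|].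
    rewrite <- Rsqr_pow2. apply Rmult_le_compat; lra. }
  assert (Hclose : Rabs (u (S n) * cf_prod (S n) - IZR u0) < IZR u0 / 2).
  { eapply Rle_lt_trans; [exact Hdrift|].
    apply Rle_lt_trans with (8 * (B + 1) ^ 2 * IZR u0 * (Rabs (cf_err 0) * IZR u0)).
    - replace (8 * (B + 1) ^ 2 * IZR u0 * (Rabs (cf_err 0) * IZR u0))
        with (2 * Rabs (cf_err 0) * ((B + 1) * (2 * IZR u0)) ^ 2) by ring.
      rewrite Rmult_assoc. apply Rmult_le_compat_l; lra.
    - replace (IZR u0 / 2) with (8 * (B + 1) ^ 2 * IZR u0 * c) by (unfold c; field; lra).
      apply Rmult_lt_compat_l; [nra|exact Hsmall]. }
  apply Rabs_def2 in Hclose as [Hc1 Hc2].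
  assert (Hu1 : 0 < u (S n)) by nra.
  assert (Hu2 : u (S n) < 1) by nra.
  apply lt_IZR in Hu1, Hu2. lia.
Qed.

End ContinuedFraction.

Lemma badly_approximable_dioph (alpha : R) : badly_approximable alpha ->
  exists c, 0 < c /\ forall p q : Z, q <> 0%Z ->
    c / Rabs (IZR q) <= Rabs (IZR q * alpha - IZR p).
Proof.
  intros [Hirr [B HB]].
  pose proof (partial_quotient_S_ge1 alpha Hirr 0). pose proof (HB 0%nat).
  exists (/ (16 * (B + 1) ^ 2)). split; [apply Rinv_0_lt_compat; nra|].
  intros p q Hq. destruct (Z_lt_le_dec 0 q).
  - rewrite Rabs_right by (apply Rle_ge, IZR_le; lia).
    apply cf_approx_lower_bound_pos; auto; lia.
  - rewrite Rabs_left, <- opp_IZR by (apply IZR_lt; lia).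
    replace (IZR q * alpha - IZR p) with (- (IZR (- q) * alpha - IZR (- p)))
      by (rewrite !opp_IZR; ring).
    rewrite Rabs_Ropp. apply cf_approx_lower_bound_pos; auto; lia.
Qed.

Fixpoint rsum (f : nat -> R) (n : nat) : R :=
  match n with O => 0 | S m => rsum f m + f m end.

Lemma rsum_ext (f g : nat -> R) (n : nat) :
  (forall i, (i < n)%nat -> f i = g i) -> rsum f n = rsum g n.
Proof.
  induction n as [|n IH]; intros Hfg; simpl; [reflexivity|].
  rewrite IH, (Hfg n) by (auto; lia). reflexivity.
Qed.

Lemma rsum_le (f g : nat -> R) (n : nat) :
  (forall i, (i < n)%nat -> f i <= g i) -> rsum f n <= rsum g n.
Proof.
  induction n as [|n IH]; intros Hfg; simpl; [lra|].
  pose proof (IH ltac:(auto)). pose proof (Hfg n ltac:(lia)). lra.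
Qed.

Lemma rsum_const (c : R) (n : nat) : rsum (fun _ => c) n = INR n * c.
Proof. induction n as [|n IH]; simpl rsum; [simpl; ring|]. rewrite IH, S_INR. ring. Qed.

Lemma rsum_plus (f g : nat -> R) (n : nat) :
  rsum (fun i => f i + g i) n = rsum f n + rsum g n.
Proof. induction n as [|n IH]; simpl; [ring|]. rewrite IH. ring. Qed.

Lemma rsum_scal (c : R) (f : nat -> R) (n : nat) :
  rsum (fun i => c * f i) n = c * rsum f n.
Proof. induction n as [|n IH]; simpl; [ring|]. rewrite IH. ring. Qed.

Lemma rsum_nonneg (f : nat -> R) (n : nat) :
  (forall i, (i < n)%nat -> 0 <= f i) -> 0 <= rsum f n.
Proof.
  intros Hf. rewrite <- (Rmult_0_r (INR n)), <- rsum_const. exact (rsum_le _ _ _ Hf).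
Qed.

Lemma rsum_shift (f : nat -> R) (n : nat) : rsum f (S n) = f O + rsum (fun i => f (S i)) n.
Proof. induction n as [|n IH]; simpl in *; [ring|]. rewrite IH. ring. Qed.

Lemma rsum_rev (f : nat -> R) (n : nat) : rsum (fun i => f (n - S i)%nat) n = rsum f n.
Proof.
  induction n as [|n IH]; [reflexivity|].
  rewrite rsum_shift. simpl rsum at 2. rewrite <- IH, Nat.sub_1_r. simpl pred.
  rewrite Rplus_comm. f_equal.
Qed.

Lemma rsum_split_at (f : nat -> R) (n m : nat) : (m < n)%nat ->
  rsum f n = rsum (fun i => if Nat.eqb i m then 0 else f i) n + f m.
Proof.
  induction n as [|n IH]; intros Hm; [lia|]. simpl.
  destruct (Nat.eqb_spec n m) as [->|Hnm].
  - rewrite (rsum_ext (fun i => if Nat.eqb i m then 0 else f i) f m); [ring|].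
    intros i Hi. destruct (Nat.eqb_spec i m); [lia|reflexivity].
  - rewrite IH by lia. ring.
Qed.

Lemma rsum_le_inj (f : nat -> R) (b : nat -> nat) (n m : nat) :
  (forall i, 0 <= f i) ->
  (forall h, (h < n)%nat -> (b h < m)%nat) ->
  (forall h h', (h < n)%nat -> (h' < n)%nat -> b h = b h' -> h = h') ->
  rsum (fun h => f (b h)) n <= rsum f m.
Proof.
  revert f. induction n as [|n IH]; intros f Hf Hb Hinj; simpl.
  - apply rsum_nonneg. intros; apply Hf.
  - rewrite (rsum_split_at f m (b n)) by (apply Hb; lia).
    apply Rplus_le_compat_r.
    set (f' := fun i => if Nat.eqb i (b n) then 0 else f i).
    rewrite (rsum_ext _ (fun h => f' (b h))).
    + apply IH; auto.
      intros i. unfold f'. destruct (Nat.eqb i (b n)); [lra|apply Hf].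
    + intros h Hh. unfold f'. destruct (Nat.eqb_spec (b h) (b n)) as [E|_]; [|reflexivity].
      apply Hinj in E; lia.
Qed.

Section WeylDifferencing.
Variable phi : nat -> R.

Definition cos_sum (n : nat) : R := rsum (fun i => cos (phi i)) n.
Definition sin_sum (n : nat) : R := rsum (fun i => sin (phi i)) n.

Definition weyl_diff_sum (n : nat) : R :=
  rsum (fun d => rsum (fun i => cos (phi (i + S d)%nat - phi i)) (n - S d)) n.

Lemma weyl_diff_sum_S (n : nat) :
  weyl_diff_sum (S n) = weyl_diff_sum n + rsum (fun i => cos (phi n - phi i)) n.
Proof.
  unfold weyl_diff_sum. simpl rsum at 1. rewrite Nat.sub_diag, Rplus_0_r.
  rewrite <- (rsum_rev (fun i => cos (phi n - phi i)) n), <- rsum_plus.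
  apply rsum_ext. intros d Hd.
  replace (n - d)%nat with (S (n - S d)) by lia. simpl rsum at 1.
  replace (n - S d + S d)%nat with n by lia. reflexivity.
Qed.

Lemma weyl_differencing (n : nat) :
  cos_sum n ^ 2 + sin_sum n ^ 2 = INR n + 2 * weyl_diff_sum n.
Proof.
  induction n as [|n IH]; [unfold cos_sum, sin_sum, weyl_diff_sum; simpl; ring|].
  rewrite weyl_diff_sum_S, S_INR.
  assert (Hcross : rsum (fun i => cos (phi n - phi i)) n
                   = cos (phi n) * cos_sum n + sin (phi n) * sin_sum n).
  { unfold cos_sum, sin_sum. rewrite <- !rsum_scal, <- rsum_plus.
    apply rsum_ext. intros. apply cos_minus. }
  rewrite Hcross. unfold cos_sum, sin_sum in *. simpl rsum.
  pose proof (sin2_cos2 (phi n)) as Hpyth. unfold Rsqr in Hpyth. nra.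
Qed.

End WeylDifferencing.

Lemma geom_cos_sum (t : R) (K : nat) :
  2 * sin (t / 2) * rsum (fun i => cos (INR i * t)) K = sin ((INR K - 1/2) * t) + sin (t / 2).
Proof.
  induction K as [|K IH].
  - simpl. replace ((0 - 1/2) * t) with (- (t / 2)) by field. rewrite sin_neg. ring.
  - simpl rsum. rewrite S_INR, Rmult_plus_distr_l, IH.
    replace ((INR K - 1/2) * t) with (INR K * t - t / 2) by field.
    replace ((INR K + 1 - 1/2) * t) with (INR K * t + t / 2) by field.
    rewrite sin_minus, sin_plus. ring.
Qed.

Lemma geom_sin_sum (t : R) (K : nat) :
  2 * sin (t / 2) * rsum (fun i => sin (INR i * t)) K = cos (t / 2) - cos ((INR K - 1/2) * t).
Proof.
  induction K as [|K IH].
  - simpl. replace ((0 - 1/2) * t) with (- (t / 2)) by field. rewrite cos_neg. ring.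
  - simpl rsum. rewrite S_INR, Rmult_plus_distr_l, IH.
    replace ((INR K - 1/2) * t) with (INR K * t - t / 2) by field.
    replace ((INR K + 1 - 1/2) * t) with (INR K * t + t / 2) by field.
    rewrite cos_minus, cos_plus. ring.
Qed.

Lemma geom_sum_sq_sin_half_le (t : R) (K : nat) :
  sin (t / 2) ^ 2 * (rsum (fun i => cos (INR i * t)) K ^ 2
                     + rsum (fun i => sin (INR i * t)) K ^ 2) <= 1.
Proof.
  pose proof (geom_cos_sum t K) as Hc. pose proof (geom_sin_sum t K) as Hs.
  set (A := (INR K - 1/2) * t) in *.
  pose proof (sin2_cos2 A). pose proof (sin2_cos2 (t / 2)). unfold Rsqr in *.
  pose proof (COS_bound (A + t / 2)) as [Hcos _]. rewrite cos_plus in Hcos.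
  (* the squares of the two identities add up to 2 - 2 cos (A + t/2) <= 4 *)
  nra.
Qed.

Lemma cos_shift_sum_sq_le (psi t : R) (K : nat) :
  rsum (fun i => cos (psi + INR i * t)) K ^ 2
  <= rsum (fun i => cos (INR i * t)) K ^ 2 + rsum (fun i => sin (INR i * t)) K ^ 2.
Proof.
  rewrite (rsum_ext _ (fun i => cos psi * cos (INR i * t) + (- sin psi) * sin (INR i * t)))
    by (intros; rewrite cos_plus; ring).
  rewrite rsum_plus, !rsum_scal.
  set (C := rsum (fun i => cos (INR i * t)) K). set (S := rsum (fun i => sin (INR i * t)) K).
  pose proof (sin2_cos2 psi) as Hpyth. unfold Rsqr in Hpyth.
  assert (Hid : (cos psi * C + - sin psi * S) ^ 2 + (cos psi * S + sin psi * C) ^ 2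
                = (sin psi * sin psi + cos psi * cos psi) * (C ^ 2 + S ^ 2)) by ring.
  rewrite Hpyth, Rmult_1_l in Hid. pose proof (pow2_ge_0 (cos psi * S + sin psi * C)). lra.
Qed.

Lemma cos_arith_sum_le (psi t s : R) (K : nat) :
  0 < s -> s <= Rabs (sin (t / 2)) -> rsum (fun i => cos (psi + INR i * t)) K <= / s.
Proof.
  intros Hs Hsin.
  pose proof (cos_shift_sum_sq_le psi t K) as Hsq.
  pose proof (geom_sum_sq_sin_half_le t K) as Hgeom.
  set (Q := rsum (fun i => cos (INR i * t)) K ^ 2 + rsum (fun i => sin (INR i * t)) K ^ 2) in *.
  set (X := rsum (fun i => cos (psi + INR i * t)) K) in *.
  assert (HsQ : s ^ 2 * Q <= 1).
  { rewrite <- pow2_abs in Hgeom. assert (0 <= Q) by (unfold Q; nra).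
    apply Rle_trans with (Rabs (sin (t / 2)) ^ 2 * Q); [|exact Hgeom].
    apply Rmult_le_compat_r; [assumption|]. apply pow_incr. lra. }
  assert (HsX : s * X <= 1) by nra.
  apply (Rmult_le_reg_l s); [exact Hs|]. rewrite Rinv_r; lra.
Qed.

Lemma Rabs_sin_plus_IZR_PI (x : R) (z : Z) : Rabs (sin (x + IZR z * PI)) = Rabs (sin x).
Proof.
  assert (Hnat : forall y n, Rabs (sin (y + INR n * PI)) = Rabs (sin y)).
  { intros y. induction n as [|n IH]; [simpl; rewrite Rmult_0_l, Rplus_0_r; reflexivity|].
    rewrite S_INR, Rmult_plus_distr_r, Rmult_1_l, <- Rplus_assoc, neg_sin, Rabs_Ropp.
    exact IH. }
  destruct (Z_le_gt_dec 0 z).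
  - rewrite <- (Z2Nat.id z), <- INR_IZR_INZ by lia. apply Hnat.
  - rewrite <- (Hnat _ (Z.to_nat (- z))), INR_IZR_INZ, Z2Nat.id, opp_IZR by lia.
    f_equal. f_equal. ring.
Qed.

Lemma sin_PI_mul_ge (y : R) : 0 <= y <= 1/2 -> y <= sin (PI * y).
Proof.
  intros Hy. pose proof PI2_3_2. pose proof PI_4.
  (* sin x >= x - x^3 / 6 at x = PI y, with y^2 <= 1/4 and PI^3 <= 24 (PI - 1) *)
  destruct (sin_bound (PI * y) 0) as [Htaylor _]; [nra|nra|].
  unfold sin_approx, sin_term in Htaylor. simpl in Htaylor.
  assert (Hpi3 : PI ^ 3 <= 24 * PI - 24).
  { assert (0 <= (PI - 3) * (4 - PI) * PI) by (apply Rmult_le_pos; nra). nra. }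
  assert (Hcube : PI ^ 3 * y * (y * y) <= PI ^ 3 * y * (1/4)).
  { apply Rmult_le_compat_l; [|nra]. assert (0 < PI ^ 3) by (apply pow_lt; lra). nra. }
  assert (PI ^ 3 * y <= (24 * PI - 24) * y) by nra.
  nra.
Qed.

Lemma Rabs_le_Rabs_sin_PI_mul (d : R) : Rabs d <= 1/2 -> Rabs d <= Rabs (sin (PI * d)).
Proof.
  intros Hd. destruct (Rle_lt_dec 0 d).
  - rewrite Rabs_right in * by lra. pose proof (sin_PI_mul_ge d ltac:(lra)).
    rewrite Rabs_right; lra.
  - rewrite Rabs_left in * by lra. pose proof (sin_PI_mul_ge (- d) ltac:(lra)).
    replace (PI * d) with (- (PI * - d)) by ring. rewrite sin_neg, Rabs_Ropp, Rabs_right; lra.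
Qed.

Lemma ln_le_minus_1 (y : R) : 0 < y -> ln y <= y - 1.
Proof. intros Hy. pose proof (exp_ineq1_le (ln y)). rewrite exp_ln in * by lra. lra. Qed.

Lemma harmonic_le (n : nat) : rsum (fun m => / INR (S m)) n <= 1 + ln (INR n + 1).
Proof.
  assert (HS : forall m, rsum (fun j => / INR (S j)) (S m) <= 1 + ln (INR (S m))).
  { intros m. induction m as [|m IH]; [simpl; rewrite ln_1; lra|].
    change (rsum (fun j => / INR (S j)) (S (S m)))
      with (rsum (fun j => / INR (S j)) (S m) + / INR (S (S m))).
    rewrite (S_INR (S m)) in *. pose proof (lt_0_INR (S m) ltac:(lia)).
    (* 1/(m+2) <= ln (m+2) - ln (m+1), from ln y <= y - 1 at y = (m+1)/(m+2) *)
    assert (Hy : 0 < INR (S m) / (INR (S m) + 1)) by (apply Rdiv_lt_0_compat; lra).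
    pose proof (ln_le_minus_1 _ Hy) as Hln.
    unfold Rdiv in Hln. rewrite ln_mult, ln_Rinv in Hln by
      (try apply Rinv_0_lt_compat; lra).
    assert (INR (S m) * / (INR (S m) + 1) - 1 = - / (INR (S m) + 1)) by (field; lra).
    lra. }
  destruct n as [|n]; [simpl; rewrite Rplus_0_l, ln_1; lra|].
  eapply Rle_trans; [apply HS|].
  pose proof (lt_0_INR (S n) ltac:(lia)). apply Rplus_le_compat_l, ln_le; lra.
Qed.

Lemma Int_part_nonneg (r : R) : 0 <= r -> (0 <= Int_part r)%Z.
Proof.
  intros Hr. destruct (base_Int_part r).
  enough (-1 < Int_part r)%Z by lia. apply lt_IZR. lra.
Qed.

Lemma Int_part_le_compat (r s : R) : r <= s -> (Int_part r <= Int_part s)%Z.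
Proof.
  intros Hrs. destruct (base_Int_part r), (base_Int_part s).
  enough (Int_part r < Int_part s + 1)%Z by lia.
  apply lt_IZR. rewrite plus_IZR. lra.
Qed.

Section SeparatedSum.
Variables (sig Lr : R) (H : nat) (del T : nat -> R).
Hypothesis sig_pos : 0 < sig.
Hypothesis Lr_nonneg : 0 <= Lr.
Hypothesis del_bound : forall h, (h < H)%nat -> Rabs (del h) <= 1/2.
Hypothesis del_sep : forall h h', (h < H)%nat -> (h' < H)%nat -> h <> h' ->
  sig <= Rabs (del h - del h').
Hypothesis T_le_Lr : forall h, (h < H)%nat -> T h <= Lr.
Hypothesis T_le_inv : forall h, (h < H)%nat -> sig <= Rabs (del h) -> T h <= / Rabs (del h).

(* Bucket 2 j + s holds the del h of sign s with |del h| in [j sig, (j+1) sig):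
   by separation each bucket holds at most one point, and a point in bucket
   n >= 2 has |del h| >= (n - 1) sig / 2. *)
Let level (h : nat) : nat := Z.to_nat (Int_part (Rabs (del h) / sig)).
Let sign (h : nat) : nat := if Rle_dec 0 (del h) then 0%nat else 1%nat.
Let bucket (h : nat) : nat := (2 * level h + sign h)%nat.
Let bucket_max (n : nat) : R := if (n <? 2)%nat then Lr else 2 / ((INR n - 1) * sig).
Let nlevels : nat := Z.to_nat (Int_part (/ (2 * sig))).

Lemma sign_le1 (h : nat) : (sign h <= 1)%nat.
Proof. unfold sign. destruct Rle_dec; lia. Qed.

Lemma level_spec (h : nat) : INR (level h) <= Rabs (del h) / sig < INR (level h) + 1.
Proof.
  unfold level. assert (0 <= Rabs (del h) / sig) by (apply Rdiv_le_0_compat; [apply Rabs_pos|lra]).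
  rewrite INR_IZR_INZ, Z2Nat.id by (apply Int_part_nonneg; lra).
  destruct (base_Int_part (Rabs (del h) / sig)). lra.
Qed.

Lemma bucket_max_nonneg (n : nat) : 0 <= bucket_max n.
Proof.
  unfold bucket_max. destruct (Nat.ltb_spec n 2) as [|Hn]; [lra|].
  apply le_INR in Hn. simpl in Hn.
  apply Rlt_le, Rdiv_lt_0_compat; [lra|]. apply Rmult_lt_0_compat; lra.
Qed.

Lemma T_le_bucket_max (h : nat) : (h < H)%nat -> T h <= bucket_max (bucket h).
Proof.
  intros Hh. pose proof (level_spec h) as [Hlo _]. pose proof (sign_le1 h).
  unfold bucket_max. destruct (Nat.ltb_spec (bucket h) 2) as [|Hb]; [auto|].
  assert (Hlev : 1 <= INR (level h)) by (apply (le_INR 1); unfold bucket in *; lia).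
  assert (Hb1 : 1 <= INR (bucket h) - 1) by (apply le_INR in Hb; simpl in Hb; lra).
  assert (Hbl : INR (bucket h) - 1 <= 2 * INR (level h)).
  { unfold bucket. rewrite plus_INR, mult_INR. apply le_INR in H0. simpl in *. lra. }
  assert (Hdel : INR (level h) * sig <= Rabs (del h)).
  { apply (Rmult_le_compat_r sig) in Hlo; [|lra].
    unfold Rdiv in Hlo. rewrite Rmult_assoc, Rinv_l, Rmult_1_r in Hlo; lra. }
  eapply Rle_trans; [apply T_le_inv; [exact Hh|nra]|].
  replace (2 / ((INR (bucket h) - 1) * sig)) with (/ ((INR (bucket h) - 1) * sig / 2))
    by (field; lra).
  apply Rinv_le_contravar; nra.
Qed.

Lemma bucket_lt (h : nat) : (h < H)%nat -> (bucket h < 2 * nlevels + 2)%nat.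
Proof.
  intros Hh. pose proof (sign_le1 h).
  enough (level h <= nlevels)%nat by (unfold bucket; lia).
  apply Z2Nat.inj_le.
  - apply Int_part_nonneg, Rdiv_le_0_compat; [apply Rabs_pos|lra].
  - apply Int_part_nonneg, Rlt_le, Rinv_0_lt_compat; lra.
  - apply Int_part_le_compat. pose proof (del_bound h Hh).
    replace (/ (2 * sig)) with ((1/2) / sig) by (field; lra).
    apply Rmult_le_compat_r; [apply Rlt_le, Rinv_0_lt_compat|]; lra.
Qed.

Lemma bucket_inj (h h' : nat) : (h < H)%nat -> (h' < H)%nat -> bucket h = bucket h' -> h = h'.
Proof.
  intros Hh Hh' E. pose proof (sign_le1 h). pose proof (sign_le1 h').
  assert (El : level h = level h') by (unfold bucket in E; lia).
  assert (Es : sign h = sign h') by (unfold bucket in E; lia).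
  destruct (Nat.eq_dec h h') as [|Hne]; [assumption|exfalso].
  pose proof (del_sep h h' Hh Hh' Hne).
  pose proof (level_spec h). pose proof (level_spec h'). rewrite El in *.
  assert (Hclose : Rabs (Rabs (del h) / sig - Rabs (del h') / sig) < 1)
    by (apply Rabs_def1; lra).
  replace (Rabs (del h) / sig - Rabs (del h') / sig)
    with ((Rabs (del h) - Rabs (del h')) / sig) in Hclose by (field; lra).
  rewrite Rabs_div, (Rabs_right sig) in Hclose by lra.
  apply (Rmult_lt_compat_r sig) in Hclose; [|lra].
  unfold Rdiv in Hclose. rewrite Rmult_assoc, Rinv_l, Rmult_1_r, Rmult_1_l in Hclose by lra.
  unfold sign in Es. destruct (Rle_dec 0 (del h)), (Rle_dec 0 (del h')); try discriminate.
  - rewrite (Rabs_right (del h)), (Rabs_right (del h')) in Hclose by lra. lra.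
  - rewrite (Rabs_left (del h)), (Rabs_left (del h')) in Hclose by lra.
    replace (- del h - - del h') with (- (del h - del h')) in Hclose by ring.
    rewrite Rabs_Ropp in Hclose. lra.
Qed.

Lemma separated_sum_le : rsum T H <= 2 * Lr + 2 / sig * (1 + ln (/ sig + 1)).
Proof.
  apply Rle_trans with (rsum (fun h => bucket_max (bucket h)) H).
  { apply rsum_le. exact T_le_bucket_max. }
  eapply Rle_trans.
  { apply (rsum_le_inj bucket_max bucket H (2 * nlevels + 2));
      [exact bucket_max_nonneg|exact bucket_lt|exact bucket_inj]. }
  replace (2 * nlevels + 2)%nat with (S (S (2 * nlevels))) by lia.
  rewrite !rsum_shift.
  rewrite (rsum_ext _ (fun m => 2 / sig * / INR (S m))).
  2: { intros m _. unfold bucket_max.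
       replace (S (S m) <? 2)%nat with false by (symmetry; apply Nat.ltb_ge; lia).
       rewrite !S_INR. field. pose proof (pos_INR m). lra. }
  rewrite rsum_scal. change (bucket_max 0) with Lr. change (bucket_max 1) with Lr.
  assert (Hlevels : INR (2 * nlevels) <= / sig).
  { unfold nlevels. rewrite mult_INR, (INR_IZR_INZ (Z.to_nat _)), Z2Nat.id.
    - destruct (base_Int_part (/ (2 * sig))). simpl.
      replace (/ sig) with (2 * / (2 * sig)) by (field; lra). lra.
    - apply Int_part_nonneg, Rlt_le, Rinv_0_lt_compat; lra. }
  pose proof (harmonic_le (2 * nlevels)).
  assert (ln (INR (2 * nlevels) + 1) <= ln (/ sig + 1))
    by (apply ln_le; [pose proof (pos_INR (2 * nlevels))|]; lra).
  assert (0 < 2 / sig) by (apply Rdiv_lt_0_compat; lra).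
  assert (2 / sig * rsum (fun m => / INR (S m)) (2 * nlevels)
          <= 2 / sig * (1 + ln (/ sig + 1))) by (apply Rmult_le_compat_l; lra).
  lra.
Qed.

End SeparatedSum.

Section QuadraticWeylSum.
Variables (beta sig : R) (M L : nat).
Hypothesis sig_pos : 0 < sig.
Hypothesis beta_far : forall z A : Z, z <> 0%Z -> Rabs (IZR z) <= INR L ->
  sig <= Rabs (2 * beta * IZR z - IZR A).

Let phi (i : nat) : R := 2 * PI * beta * INR (S M + i) ^ 2.
Let freq (d : nat) : R := 2 * beta * INR (S d).
(* signed distance from freq d to the nearest integer *)
Let dist (d : nat) : R := freq d - IZR (Int_part (freq d + 1/2)).
Let inner (d : nat) : R := rsum (fun i => cos (phi (i + S d)%nat - phi i)) (L - S d).

Lemma inner_le_L (d : nat) : inner d <= INR L.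
Proof.
  apply Rle_trans with (rsum (fun _ => 1) (L - S d)).
  - apply rsum_le. intros. apply COS_bound.
  - rewrite rsum_const, Rmult_1_r. apply le_INR. lia.
Qed.

Lemma dist_bound (d : nat) : Rabs (dist d) <= 1/2.
Proof. unfold dist. destruct (base_Int_part (freq d + 1/2)). apply Rabs_le. lra. Qed.

Lemma inner_le_inv_dist (d : nat) : 0 < Rabs (dist d) -> inner d <= / Rabs (dist d).
Proof.
  intros Hpos.
  unfold inner. rewrite (rsum_ext _ (fun i => cos (2 * PI * beta * (2 * INR (S M) * INR (S d)
                          + INR (S d) ^ 2) + INR i * (2 * PI * freq d)))).
  2: { intros i _. f_equal. unfold phi, freq. rewrite !plus_INR. ring. }
  apply cos_arith_sum_le; [exact Hpos|].
  replace (2 * PI * freq d / 2) with (PI * dist d + IZR (Int_part (freq d + 1/2)) * PI)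
    by (unfold dist; field).
  rewrite Rabs_sin_plus_IZR_PI. apply Rabs_le_Rabs_sin_PI_mul, dist_bound.
Qed.

Lemma dist_sep (d d' : nat) : (d < L)%nat -> (d' < L)%nat -> d <> d' ->
  sig <= Rabs (dist d - dist d').
Proof.
  intros Hd Hd' Hne.
  replace (dist d - dist d') with (2 * beta * IZR (Z.of_nat d - Z.of_nat d')
    - IZR (Int_part (freq d + 1/2) - Int_part (freq d' + 1/2)))
    by (unfold dist, freq; rewrite !minus_IZR, <- !INR_IZR_INZ, !S_INR; ring).
  apply beta_far; [lia|].
  rewrite minus_IZR, <- !INR_IZR_INZ. apply lt_INR in Hd, Hd'.
  pose proof (pos_INR d). pose proof (pos_INR d'). apply Rabs_le. lra.
Qed.

Lemma quad_weyl_sum_sq_le_trivial : cos_sum phi L ^ 2 + sin_sum phi L ^ 2 <= 3 * INR L ^ 2.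
Proof.
  rewrite weyl_differencing.
  assert (weyl_diff_sum phi L <= INR L * INR L).
  { rewrite <- rsum_const. apply rsum_le. intros d _. apply inner_le_L. }
  assert (INR L <= INR L ^ 2).
  { destruct (Nat.eq_0_gt_0_cases L) as [HL|HL]; [rewrite HL; simpl; lra|].
    apply (le_INR 1) in HL. simpl in *. nra. }
  nra.
Qed.

Lemma quad_weyl_sum_sq_le_separated :
  cos_sum phi L ^ 2 + sin_sum phi L ^ 2 <= 5 * INR L + 4 / sig * (1 + ln (/ sig + 1)).
Proof.
  rewrite weyl_differencing.
  pose proof (separated_sum_le sig (INR L) L dist inner sig_pos (pos_INR L)
     (fun d _ => dist_bound d) dist_sep (fun d _ => inner_le_L d)
     (fun d _ Hd => inner_le_inv_dist d ltac:(lra))).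
  change (weyl_diff_sum phi L) with (rsum inner L).
  replace (4 / sig) with (2 * (2 / sig)) by (field; lra). lra.
Qed.

End QuadraticWeylSum.

Lemma dioph_multiple_far (alpha c : R) (k : Z) (l L : nat) :
  (forall p q : Z, q <> 0%Z -> c / Rabs (IZR q) <= Rabs (IZR q * alpha - IZR p)) ->
  0 < c -> k <> 0%Z -> (0 < l)%nat ->
  forall z A : Z, z <> 0%Z -> Rabs (IZR z) <= INR L ->
  c / (2 * Rabs (IZR k) * INR L * INR l) <= Rabs (2 * (IZR k * alpha / INR l) * IZR z - IZR A).
Proof.
  intros Hdio Hc Hk Hl z A Hz HzL.
  assert (Hlpos : 0 < INR l) by (apply lt_0_INR; lia).
  assert (Hkpos : 0 < Rabs (IZR k)) by (apply Rabs_pos_lt, not_0_IZR, Hk).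
  assert (Hzpos : 0 < Rabs (IZR z)) by (apply Rabs_pos_lt, not_0_IZR, Hz).
  replace (2 * (IZR k * alpha / INR l) * IZR z - IZR A)
    with ((2 * IZR k * IZR z * alpha - INR l * IZR A) / INR l) by (field; lra).
  rewrite Rabs_div, (Rabs_right (INR l)) by lra.
  pose proof (Hdio (Z.of_nat l * A)%Z (2 * k * z)%Z ltac:(lia)) as Hq.
  rewrite !mult_IZR, <- INR_IZR_INZ, !Rabs_mult, (Rabs_right 2) in Hq by lra.
  apply Rle_trans with (c / (2 * Rabs (IZR k) * Rabs (IZR z)) / INR l).
  - replace (c / (2 * Rabs (IZR k) * Rabs (IZR z)) / INR l)
      with (c / (2 * Rabs (IZR k) * Rabs (IZR z) * INR l)) by (field; lra).
    unfold Rdiv. apply Rmult_le_compat_l; [lra|].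
    apply Rinv_le_contravar; [repeat apply Rmult_lt_0_compat; lra|].
    apply Rmult_le_compat_r; [lra|]. apply Rmult_le_compat_l; lra.
  - unfold Rdiv at 2. apply Rmult_le_compat_r; [apply Rlt_le, Rinv_0_lt_compat; lra|].
    exact Hq.
Qed.

Lemma sum_n_m_cexpi (theta : nat -> R) (M L : nat) :
  sum_n_m (fun n => cexpi (theta n)) (S M) (M + L)
  = (cos_sum (fun i => theta (S M + i)%nat) L, sin_sum (fun i => theta (S M + i)%nat) L).
Proof.
  induction L as [|L IH].
  - rewrite Nat.add_0_r, sum_n_m_zero by lia. reflexivity.
  - rewrite Nat.add_succ_r, sum_n_Sm, IH by lia.
    unfold cos_sum, sin_sum, cexpi. simpl rsum.
    replace (S M + L)%nat with (S (M + L)) by lia. reflexivity.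
Qed.

(* from 5 L + 4 / sig * (1 + ln (1 / sig + 1)) with sig = c / (2 |k| L l),
   using 1 / sig + 1 <= (2 / c + 1) L^2 and 2 ln L <= L^(2 eps) / eps *)
Definition weyl_const (c eps : R) : R := 5 + 8 / c * (1 + ln (2 / c + 1) + / eps).

Lemma weyl_const_ge5 (c eps : R) : 0 < c -> 0 < eps -> 5 <= weyl_const c eps.
Proof.
  intros Hc He. unfold weyl_const.
  assert (0 <= ln (2 / c + 1)).
  { rewrite <- ln_1. apply ln_le; [lra|]. pose proof (Rdiv_lt_0_compat 2 c ltac:(lra) Hc). lra. }
  assert (0 < / eps) by (apply Rinv_0_lt_compat; lra).
  assert (0 < 8 / c) by (apply Rdiv_lt_0_compat; lra).
  assert (0 <= 8 / c * (1 + ln (2 / c + 1) + / eps)) by (apply Rmult_le_pos; lra).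
  lra.
Qed.

Lemma ln_le_Rpower_div (x eps : R) : 1 <= x -> 0 < eps -> 2 * ln x <= Rpower x (2 * eps) / eps.
Proof.
  intros Hx He. assert (Hpos : 0 < Rpower x (2 * eps)) by apply exp_pos.
  pose proof (ln_le_minus_1 _ Hpos) as Hln. rewrite ln_Rpower in Hln.
  apply (Rmult_le_reg_l eps); [lra|].
  replace (eps * (Rpower x (2 * eps) / eps)) with (Rpower x (2 * eps)) by (field; lra). lra.
Qed.

Section FinalBound.
Variables (c eps Lr kk lr : R).
Hypotheses (c_pos : 0 < c) (eps_pos : 0 < eps).
Hypotheses (Lr_ge1 : 1 <= Lr) (kk_ge1 : 1 <= kk) (lr_ge1 : 1 <= lr).

Let growth : R := Rpower Lr (2 * eps).

Lemma growth_ge1 : 1 <= growth.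
Proof. unfold growth. rewrite <- (Rpower_O Lr) by lra. apply Rle_Rpower; lra. Qed.

Lemma small_modulus_case_le : kk * lr < Lr ->
  5 * Lr + 4 / (c / (2 * kk * Lr * lr)) * (1 + ln (/ (c / (2 * kk * Lr * lr)) + 1))
  <= weyl_const c eps * (Lr * growth) * kk * lr.
Proof.
  intros Hsmall. pose proof growth_ge1.
  assert (Hc2 : 0 < 2 / c) by (apply Rdiv_lt_0_compat; lra).
  assert (HklL : 1 <= kk * lr * Lr) by (assert (1 <= kk * lr) by nra; nra).
  set (D := 2 / c + 1).
  replace (/ (c / (2 * kk * Lr * lr))) with (2 / c * (kk * lr * Lr)) by (field; lra).
  replace (4 / (c / (2 * kk * Lr * lr))) with (8 / c * (kk * Lr * lr)) by (field; lra).
  assert (Hln : ln (2 / c * (kk * lr * Lr) + 1) <= ln D + growth / eps).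
  { pose proof (ln_le_Rpower_div Lr eps Lr_ge1 eps_pos).
    assert (2 / c * (kk * lr * Lr) <= 2 / c * (Lr * Lr))
      by (apply Rmult_le_compat_l; nra).
    assert (ln (2 / c * (kk * lr * Lr) + 1) <= ln (D * (Lr * Lr))).
    { apply ln_le; [nra|]. unfold D. nra. }
    rewrite !ln_mult in * by (unfold D; nra). unfold growth in *. lra. }
  assert (H8c : 0 < 8 / c) by (apply Rdiv_lt_0_compat; lra).
  assert (8 / c * (kk * Lr * lr) * (1 + ln (2 / c * (kk * lr * Lr) + 1))
          <= 8 / c * (kk * Lr * lr) * ((1 + ln D + / eps) * growth)).
  { apply Rmult_le_compat_l; [apply Rmult_le_pos; nra|].
    replace (growth / eps) with (/ eps * growth) in Hln by (field; lra).
    assert (0 <= ln D) by (rewrite <- ln_1; apply ln_le; unfold D; lra).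
    assert (0 < / eps) by (apply Rinv_0_lt_compat; lra). nra. }
  assert (5 * Lr <= 5 * (Lr * growth) * kk * lr).
  { assert (Lr <= Lr * growth * (kk * lr)) by (assert (1 <= kk * lr) by nra; nra). nra. }
  unfold weyl_const. fold D. nra.
Qed.

Lemma sqrt_le_of_weyl_cases (Q : R) : 0 <= Q -> Q <= 3 * Lr ^ 2 ->
  (kk * lr < Lr ->
   Q <= 5 * Lr + 4 / (c / (2 * kk * Lr * lr)) * (1 + ln (/ (c / (2 * kk * Lr * lr)) + 1))) ->
  sqrt Q <= sqrt (weyl_const c eps) * Rpower Lr (1/2 + eps) * Rpower kk (1/2 + eps) * sqrt lr.
Proof.
  intros HQ HQtriv HQsep. pose proof growth_ge1.
  pose proof (weyl_const_ge5 c eps c_pos eps_pos).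
  assert (Hmain : Q <= weyl_const c eps * (Lr * growth) * kk * lr).
  { destruct (Rlt_le_dec (kk * lr) Lr) as [Hlt|Hge].
    - eapply Rle_trans; [apply HQsep, Hlt|]. apply small_modulus_case_le, Hlt.
    - eapply Rle_trans; [exact HQtriv|].
      assert (3 * Lr ^ 2 <= 3 * Lr * (kk * lr)) by nra.
      assert (Lr * (kk * lr) <= (Lr * growth) * (kk * lr)) by nra.
      nra. }
  set (PL := Rpower Lr (1/2 + eps)). set (Pk := Rpower kk (1/2 + eps)).
  assert (EL : Lr * growth = PL * PL).
  { unfold PL, growth. rewrite <- !Rpower_plus, <- (Rpower_1 Lr) at 1 by lra.
    rewrite <- Rpower_plus. f_equal. lra. }
  assert (Ek : kk <= Pk * Pk).
  { unfold Pk. rewrite <- Rpower_plus, <- (Rpower_1 kk) at 1 by lra. apply Rle_Rpower; lra. }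
  assert (0 < PL) by apply exp_pos. assert (0 < Pk) by apply exp_pos.
  rewrite <- (sqrt_Rsqr (sqrt (weyl_const c eps) * PL * Pk * sqrt lr))
    by (apply Rmult_le_pos; [|apply sqrt_pos]; repeat apply Rmult_le_pos; try apply sqrt_pos; lra).
  apply sqrt_le_1_alt. unfold Rsqr.
  replace (sqrt (weyl_const c eps) * PL * Pk * sqrt lr * (sqrt (weyl_const c eps) * PL * Pk * sqrt lr))
    with ((sqrt (weyl_const c eps) * sqrt (weyl_const c eps)) * (PL * PL) * (Pk * Pk)
          * (sqrt lr * sqrt lr)) by ring.
  rewrite !sqrt_sqrt, <- EL by lra.
  eapply Rle_trans; [exact Hmain|].
  assert (0 <= weyl_const c eps * (Lr * growth) * lr) by (apply Rmult_le_pos; nra).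
  nra.
Qed.

End FinalBound.

Theorem lemma5p1 :
  forall alpha : R, badly_approximable alpha ->
  forall eps : R, 0 < eps ->
  exists Cst : R, 0 < Cst /\
    forall (k : Z) (l M N : nat),
      k <> 0%Z -> (0 < l)%nat -> (M < N)%nat ->
      Cmod (sum_n_m
              (fun n : nat =>
                 cexpi (2 * PI * IZR k * alpha * INR n ^ 2 / INR l))
              (S M) N)
      <= Cst * Rpower (INR (N - M)) (1/2 + eps)
             * Rpower (Rabs (IZR k)) (1/2 + eps) * sqrt (INR l).
Proof.
  intros alpha Hba eps Heps.
  destruct (badly_approximable_dioph alpha Hba) as [c [Hc Hdio]].
  exists (sqrt (weyl_const c eps)).
  split; [apply sqrt_lt_R0; pose proof (weyl_const_ge5 c eps Hc Heps); lra|].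
  intros k l M N Hk Hl HMN.
  destruct (Nat.le_exists_sub (S M) N HMN) as [L0 [-> _]].
  set (L := S L0). replace (L0 + S M - M)%nat with L by lia.
  replace (L0 + S M)%nat with (M + L)%nat by lia.
  assert (HL1 : 1 <= INR L) by (apply (le_INR 1); lia).
  assert (Hl1 : 1 <= INR l) by (apply (le_INR 1); lia).
  assert (Hk1 : 1 <= Rabs (IZR k)) by (rewrite <- abs_IZR; apply IZR_le; lia).
  rewrite (sum_n_m_ext_loc _ (fun n => cexpi (2 * PI * (IZR k * alpha / INR l) * INR n ^ 2)))
    by (intros; f_equal; field; lra).
  rewrite sum_n_m_cexpi. unfold Cmod. simpl fst; simpl snd.
  apply sqrt_le_of_weyl_cases; auto.
  - apply Rplus_le_le_0_compat; apply pow2_ge_0.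
  - apply quad_weyl_sum_sq_le_trivial.
  - intros _. apply quad_weyl_sum_sq_le_separated.
    + apply Rdiv_lt_0_compat; [lra|]. repeat apply Rmult_lt_0_compat; lra.
    + apply dioph_multiple_far; auto.
Qed.
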